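(* For $n\ge 3$, let $\mathscr{L}_n=\langle Q,\{a,b\},\delta\rangle$ with $Q=\{0,1,\dots,n-1\}$, where $\delta(i,b)=i+1$ for $0\le i\le n-2$ and $\delta(n-1,b)=0$; $\delta(i,a)=i+1$ for $0\le i\le n-4$, $\delta(n-3,a)=n-1$, $\delta(n-2,a)=0$ and $\delta(n-1,a)=0$. Then $sc(Syn(\mathscr{L}_n))=2^n-n$.
   Context: For a DFA $\mathscr{A}=\langle Q,\Sigma,\delta\rangle$ (total transition function, extended to words), $Syn(\mathscr{A})$ is the set of words $w\in\Sigma^*$ such that $\delta(q,w)=\delta(q',w)$ for all $q,q'\in Q$. The state complexity $sc(L)$ of a regular language $L$ is the number of states of the minimal (complete) DFA recognizing $L$. *)

From mathcomp Require Import all_boot.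
Set Implicit Arguments. Unset Strict Implicit. Unset Printing Implicit Defensive.

Inductive letter := La | Lb.

Section Automata.
Variable Sigma : Type.

Definition run (Q : Type) (delta : Q -> Sigma -> Q) (q : Q) (w : seq Sigma) : Q :=
  foldl delta q w.

Definition Syn (Q : Type) (delta : Q -> Sigma -> Q) : seq Sigma -> Prop :=
  fun w => forall q q' : Q, run delta q w = run delta q' w.

(* A complete DFA with m states (state set {0,...,m-1}, any finite state set
   is in bijection with such an ordinal type) recognizes L. *)
Definition recognizes (m : nat) (delta : 'I_m -> Sigma -> 'I_m) (s : 'I_m)
    (F : {set 'I_m}) (L : seq Sigma -> Prop) : Prop :=
  forall w, L w <-> run delta s w \in F.

Definition state_complexity_is (L : seq Sigma -> Prop) (k : nat) : Prop :=
  (exists (delta : 'I_k -> Sigma -> 'I_k) (s : 'I_k) (F : {set 'I_k}),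
      recognizes delta s F L) /\
  (forall (m : nat) (delta : 'I_m -> Sigma -> 'I_m) (s : 'I_m) (F : {set 'I_m}),
      recognizes delta s F L -> k <= m).
End Automata.

Definition Ln_nat (n i : nat) (x : letter) : nat :=
  match x with
  | Lb => if i + 2 <= n then i.+1 else 0          (* i <= n-2 -> i+1; n-1 -> 0 *)
  | La => if i + 4 <= n then i.+1                  (* i <= n-4 -> i+1 *)
          else if i + 3 == n then n.-1             (* n-3 -> n-1 *)
          else 0                                   (* n-2, n-1 -> 0 *)
  end.

(* L_n on Q = 'I_n (the fallback of insubd is never used since Ln_nat stays < n). *)
Definition Ln_delta (n : nat) (i : 'I_n) (x : letter) : 'I_n :=
  insubd i (Ln_nat n i x).

From mathcomp Require Import all_boot zify.
Set Implicit Arguments. Unset Strict Implicit.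

(** A word synchronizes a complete automaton iff it maps the whole state set
    to at most one state, so the subset automaton restricted to the sets of
    size at least 2, plus one sink for all smaller sets, recognizes Syn with
    2^n - n states.  For L_n this is optimal: [Lb] is the rotation
    i |-> i + 1 and [La^(n-1)] merges n - 2 into n - 1, so its conjugates by
    powers of [Lb] merge any j into j + 1.  Deleting states one at a time this
    way reaches every nonempty subset from Q, and for every state q some word
    sends Q \ {q} to a single state and q elsewhere, which separates any two
    distinct sets of size at least 2. *)

Lemma run_cat (Sigma Q : Type) (delta : Q -> Sigma -> Q) q u v :
  run delta q (u ++ v) = run delta (run delta q u) v.
Proof. exact: foldl_cat. Qed.

Lemma run_cons (Sigma Q : Type) (delta : Q -> Sigma -> Q) q x w :
  run delta q (x :: w) = run delta (delta q x) w.
Proof. by []. Qed.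

Lemma recognizes_enum (Sigma : Type) (Q : finType) (delta : Q -> Sigma -> Q)
    (s : Q) (F : {set Q}) (L : seq Sigma -> Prop) :
    (forall w, L w <-> run delta s w \in F) ->
  exists (delta' : 'I_#|Q| -> Sigma -> 'I_#|Q|) s' F', recognizes delta' s' F' L.
Proof.
move=> rec_L; pose delta' (i : 'I_#|Q|) x := enum_rank (delta (enum_val i) x).
have run_delta' w q : run delta' (enum_rank q) w = enum_rank (run delta q w).
  by elim: w q => //= x w IHw q; rewrite /run /= /delta' enum_rankK -IHw.
exists delta', (enum_rank s), (enum_rank @: F) => w.
by rewrite run_delta' mem_imset; [apply: rec_L | apply: enum_rank_inj].
Qed.

Lemma distinguishable_card_leq (Sigma : Type) (L : seq Sigma -> Prop)
    (I : finType) (u : I -> seq Sigma) m (delta : 'I_m -> Sigma -> 'I_m) s F :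
    (forall i j, i != j -> exists z, ~ (L (u i ++ z) <-> L (u j ++ z))) ->
  recognizes delta s F L -> #|I| <= m.
Proof.
move=> dist_u rec_L; rewrite -(card_ord m).
apply: (@leq_card _ _ (fun i => run delta s (u i))) => i j same_state.
apply/eqP; apply: contraT => /dist_u[z]; case.
by rewrite !rec_L !run_cat same_state.
Qed.

Section SynchronizingWords.
Variables (Sigma : Type) (T : finType) (delta : T -> Sigma -> T).

Definition run_set (S : {set T}) w := [set run delta q w | q in S].

Lemma run_set_nil S : run_set S [::] = S.
Proof. exact: imset_id. Qed.

Lemma run_set_cat S u v : run_set S (u ++ v) = run_set (run_set S u) v.
Proof. by rewrite /run_set -imset_comp; apply: eq_imset => q; rewrite /= run_cat. Qed.

Lemma Syn_run_setT w : Syn delta w <-> #|run_set setT w| <= 1.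
Proof.
split=> [syn_w | /card_le1_eqP card_w q q'].
  by apply/card_le1_eqP => _ _ /imsetP[q _ ->] /imsetP[q' _ ->].
by apply: card_w; apply: imset_f.
Qed.

(** The subset automaton, with all sets of at most one state merged into [None]. *)
Definition subset_state := option {A : {set T} | 1 < #|A|}.

Definition subset_delta (t : subset_state) (x : Sigma) : subset_state :=
  if t is Some A then insub (run_set (val A) [:: x]) else None.

Lemma run_subset_delta A w :
  run subset_delta (insub A) w = insub (run_set A w).
Proof.
elim: w A => [|x w IHw] A; first by rewrite run_set_nil.
rewrite -cat1s run_cat run_set_cat -IHw; congr run.
rewrite /= /subset_delta; case: insubP => [B _ -> //| small_A].
rewrite insubN // -leqNgt (leq_trans (leq_imset_card _ _)) //.
by rewrite leqNgt.
Qed.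

Lemma card_sets_gt1 : #|[pred A : {set T} | 1 < #|A|]| = 2 ^ #|T| - #|T|.+1.
Proof.
have card_small : #|[predC [pred A : {set T} | 1 < #|A|]]| = #|T|.+1.
  rewrite (@eq_card _ _ ([set A : {set T} | #|A| == 0] :|: [set A : {set T} | #|A| == 1])).
    rewrite cardsU !card_draws bin0 bin1.
    suff -> : [set A : {set T} | #|A| == 0] :&: [set A : {set T} | #|A| == 1] = set0.
      by rewrite cards0 subn0 add1n.
    by apply/setP => A; rewrite !inE; case: #|A| => [|[]].
  by move=> A; rewrite !inE /=; case: #|A| => [|[]].
have card_all : #|{set T}| = 2 ^ #|T|.
  by have := card_powerset [set: T]; rewrite powersetT !cardsT.
have := cardC [pred A : {set T} | 1 < #|A|].
by rewrite card_small card_all => <-; rewrite addnK.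
Qed.

Lemma card_subset_state : #|{: subset_state}| = 2 ^ #|T| - #|T|.
Proof.
rewrite card_option card_sig card_sets_gt1.
by have := ltn_expl #|T| (isT : 1 < 2); lia.
Qed.

Lemma Syn_recognized : exists (delta' : 'I_(2 ^ #|T| - #|T|) -> Sigma -> _) s F,
  recognizes delta' s F (Syn delta).
Proof.
rewrite -card_subset_state.
apply: (@recognizes_enum _ _ subset_delta (insub setT) [set None]) => w.
rewrite run_subset_delta Syn_run_setT inE.
case: insubP => [A big_A _ | small_A]; first by rewrite leqNgt big_A.
by rewrite leqNgt small_A.
Qed.

Definition isolating q w := exists p, forall x, (run delta x w == p) = (x != q).

Lemma run_set_isolating_le1 q w (B : {set T}) :
  isolating q w -> q \notin B -> #|run_set B w| <= 1.
Proof.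
move=> [p iso_w] qB; apply/card_le1_eqP => _ _ /imsetP[x xB ->] /imsetP[y yB ->].
have to_p z : z \in B -> run delta z w = p.
  by move=> zB; apply/eqP; rewrite iso_w; apply: contraNneq qB => <-.
by rewrite !to_p.
Qed.

Lemma run_set_isolating_gt1 q w (A : {set T}) :
  isolating q w -> q \in A -> 1 < #|A| -> 1 < #|run_set A w|.
Proof.
move=> [p iso_w] qA /card_gt1P[x [y [xA yA xy]]].
have [r rA rq] : exists2 r, r \in A & r != q.
  by case: (eqVneq x q) => [xq | ]; [exists y; rewrite // -xq eq_sym | exists x].
apply/card_gt1P; exists (run delta q w), (run delta r w).
split; [exact: imset_f | exact: imset_f |].
have /eqP r_p : run delta r w == p by rewrite iso_w.
by rewrite r_p iso_w eqxx.
Qed.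

Lemma isolating_distinguishes (A B : {set T}) :
    (forall q, exists w, isolating q w) -> 1 < #|A| -> 1 < #|B| -> A != B ->
  exists z, ~ (#|run_set A z| <= 1 <-> #|run_set B z| <= 1).
Proof.
move=> isolate big_A big_B AB.
suff separate (X Y : {set T}) q : 1 < #|X| -> q \in X -> q \notin Y ->
    exists z, ~ (#|run_set X z| <= 1 <-> #|run_set Y z| <= 1).
  case: (boolP (A \subset B)) => [sAB | /subsetPn[q qA qB]]; last exact: separate qA qB.
  have /subsetPn[q qB qA] : ~~ (B \subset A).
    by apply: contra AB => sBA; rewrite eqEsubset sAB.
  have [z not_iff] := separate _ _ _ big_B qB qA.
  by exists z => iff_z; apply: not_iff; apply: iff_sym.
move=> big_X qX qY; have [w iso_w] := isolate q; exists w => [[_ le1_X]].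
have := le1_X (run_set_isolating_le1 iso_w qY).
by rewrite leqNgt (run_set_isolating_gt1 iso_w).
Qed.

Theorem Syn_state_complexity :
    (forall A : {set T}, A != set0 -> exists w, run_set setT w = A) ->
    (forall q, exists w, isolating q w) ->
  state_complexity_is (Syn delta) (2 ^ #|T| - #|T|).
Proof.
move=> reach isolate; split; first exact: Syn_recognized.
move=> m delta' s F rec_Syn; rewrite -card_subset_state.
have syn_word : exists w, #|run_set setT w| <= 1.
  case: (pickP T) => [t _ | T0]; last by exists [::]; rewrite run_set_nil cardsT eq_card0.
  have [|w w_t] := reach [set t]; last by exists w; rewrite w_t cards1.
  by apply/set0Pn; exists t; rewrite set11.
pose word_for (t : subset_state) w :=
  if t is Some A then run_set setT w = val A else #|run_set setT w| <= 1.
have [u u_for] : exists u, forall t, word_for t (u t).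
  apply: fin_all_exists => -[A|] /=; last exact: syn_word.
  by apply: reach; rewrite -card_gt0 (ltn_trans _ (valP A)).
apply: (distinguishable_card_leq (u := u) _ rec_Syn) => t1 t2 t12.
have Syn_u t z : Syn delta (u t ++ z) <-> #|run_set (run_set setT (u t)) z| <= 1.
  by rewrite Syn_run_setT run_set_cat.
move: (u_for t1) (u_for t2) t12; case: t1 => [A|]; case: t2 => [B|] //= u_A u_B AB.
- have [|z not_iff] := isolating_distinguishes isolate (valP A) (valP B).
    by apply: contraNneq AB => /val_inj ->.
  by exists z; rewrite !Syn_u u_A u_B.
- exists [::]; rewrite !Syn_u !run_set_nil u_A => -[_ /(_ u_B)].
  by rewrite leqNgt (valP A).
- exists [::]; rewrite !Syn_u !run_set_nil u_B => -[/(_ u_A)].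
  by rewrite leqNgt (valP B).
Qed.

End SynchronizingWords.

Section LnArithmetic.
Variable n : nat.
Hypothesis n_ge3 : 3 <= n.

Lemma Ln_nat_lt i x : i < n -> Ln_nat n i x < n.
Proof. by case: x => /= lt_i_n; repeat case: ifP; lia. Qed.

Lemma run_Lb i k : i < n -> run (Ln_nat n) i (nseq k Lb) = (i + k) %% n.
Proof.
elim: k i => [|k IHk] i lt_i_n; first by rewrite addn0 modn_small.
have step : Ln_nat n i Lb = i.+1 %% n.
  case: (ltnP i.+1 n) => [lt_i1_n | ge_i1_n].
    by rewrite modn_small //=; case: ifP; lia.
  have -> : i.+1 = n by lia.
  by rewrite modnn /=; case: ifP; lia.
by rewrite run_cons step IHk ?ltn_pmod ?modnDml ?addSnnS //; lia.
Qed.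

(** [La] permutes the states other than [n - 2] cyclically, in the order
    [0, 1, ..., n - 3, n - 1]; [acycle p] is the state at position [p]. *)
Definition acycle p := if p == n.-2 then n.-1 else p.

Lemma run_La_acycle p k : p < n.-1 ->
  run (Ln_nat n) (acycle p) (nseq k La) = acycle ((p + k) %% n.-1).
Proof.
elim: k p => [|k IHk] p lt_p; first by rewrite addn0 modn_small.
have step : Ln_nat n (acycle p) La = acycle (p.+1 %% n.-1).
  case: (ltnP p.+1 n.-1) => [lt_p1 | ge_p1].
    by rewrite modn_small // /acycle /=; repeat case: ifP; lia.
  have -> : p.+1 = n.-1 by lia.
  by rewrite modnn /acycle /=; repeat case: ifP; lia.
by rewrite run_cons step IHk ?ltn_pmod ?modnDml ?addSnnS //; lia.
Qed.

Lemma run_La_cycle x : x < n ->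
  run (Ln_nat n) x (nseq n.-1 La) = if x == n.-2 then n.-1 else x.
Proof.
move=> lt_x_n; case: eqP => [-> | ne_x].
  have -> : nseq n.-1 La = La :: nseq n.-2 La by case: n n_ge3 => [|[]].
  rewrite run_cons.
  have -> : Ln_nat n n.-2 La = acycle 0 by rewrite /acycle /=; repeat case: ifP; lia.
  by rewrite run_La_acycle ?add0n ?modn_small /acycle ?eqxx //; lia.
have -> : x = acycle (if x == n.-1 then n.-2 else x).
  by rewrite /acycle; repeat case: ifP; lia.
rewrite run_La_acycle; last by case: ifP; lia.
by rewrite modnDr modn_small //; case: ifP; lia.
Qed.

(** [La ^ (n - 1)] merges [n - 2] into [n - 1]; conjugating it by a power of
    the rotation [Lb] merges [j] into [j + 1]. *)
Definition merge_word j := nseq (n.-2 - j) Lb ++ nseq n.-1 La ++ nseq j.+2 Lb.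

Lemma run_merge_word j x : j < n.-1 -> x < n ->
  run (Ln_nat n) x (merge_word j) = if x == j then j.+1 else x.
Proof.
move=> lt_j lt_x; have n_gt0 : 0 < n by lia.
rewrite !run_cat (run_Lb _ lt_x) run_La_cycle ?ltn_pmod //.
have j_to_n2 : (j + (n.-2 - j)) %% n = n.-2 by rewrite modn_small //; lia.
case: (eqVneq x j) => [-> | ne_xj].
  rewrite j_to_n2 eqxx run_Lb; last lia.
  rewrite (_ : n.-1 + j.+2 = j.+1 + n); last lia.
  by rewrite modnDr modn_small //; lia.
have -> : ((x + (n.-2 - j)) %% n == n.-2) = false.
  apply/negbTE; rewrite -[X in _ == X]j_to_n2 eqn_modDr !modn_small //; lia.
rewrite run_Lb ?ltn_pmod // modnDml (_ : x + (n.-2 - j) + j.+2 = x + n); last lia.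
by rewrite modnDr modn_small.
Qed.

Definition sweep_word k := flatten [seq merge_word j | j <- iota 0 k].

Lemma run_sweep_word k x : k <= n.-1 -> x < n ->
  run (Ln_nat n) x (sweep_word k) = maxn x k.
Proof.
elim: k => [|k IHk] le_k lt_x; first by rewrite maxn0.
rewrite /sweep_word -addn1 iotaD map_cat flatten_cat run_cat -/(sweep_word k) /= cats0.
rewrite IHk ?run_merge_word; try lia.
by case: (eqVneq (maxn x k) k); lia.
Qed.

Definition isolating_word q := nseq (n.-1 - q) Lb ++ sweep_word n.-2.

Lemma run_isolating_word q x : q < n -> x < n ->
  run (Ln_nat n) x (isolating_word q) = if x == q then n.-1 else n.-2.
Proof.
move=> lt_q lt_x; have n_gt0 : 0 < n by lia.
rewrite run_cat run_Lb // run_sweep_word ?ltn_pmod //; last lia.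
case: (eqVneq x q) => [-> | ne_xq]; first by rewrite modn_small //; lia.
suff : (x + (n.-1 - q)) %% n != n.-1 by have := ltn_pmod (x + (n.-1 - q)) n_gt0; lia.
have q_to_n1 : (q + (n.-1 - q)) %% n = n.-1 by rewrite modn_small //; lia.
by rewrite -[X in _ != X]q_to_n1 eqn_modDr !modn_small.
Qed.

End LnArithmetic.

Section LnSubsets.
Variable n : nat.
Hypothesis n_ge3 : 3 <= n.

Local Notation delta := (@Ln_delta n).

Lemma val_run_Ln (q : 'I_n) w : val (run delta q w) = run (Ln_nat n) q w.
Proof.
elim: w q => // x w IHw q.
by rewrite run_cons IHw /Ln_delta insubdK //; apply: Ln_nat_lt.
Qed.

Lemma Ln_isolating (q : 'I_n) : exists w, isolating delta q w.
Proof.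
have lt_n2 : n.-2 < n by lia.
exists (isolating_word n q), (Ordinal lt_n2) => x.
rewrite -val_eqE /= val_run_Ln run_isolating_word //.
case: (eqVneq x q) => [-> | ne_xq]; first by rewrite eqxx; lia.
by rewrite val_eqE (negPf ne_xq) eqxx.
Qed.

Lemma Ln_run_set_merge (C : {set 'I_n}) (j j1 : 'I_n) :
  j1 = j.+1 :> nat -> j1 \in C -> run_set delta C (merge_word n j) = C :\ j.
Proof.
move=> j1_succ j1C; have lt_j : j < n.-1 by have := ltn_ord j1; lia.
have run_merge (x : 'I_n) :
    run delta x (merge_word n j) = (if x == j then j1 else x) :> nat.
  by rewrite val_run_Ln run_merge_word // val_eqE; case: eqP => // _; rewrite j1_succ.
apply/setP => y; rewrite in_setD1; apply/imsetP/andP => [[x xC ->] | [ne_yj yC]].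
  case: (eqVneq x j) => [x_j | ne_xj].
    have -> : run delta x (merge_word n j) = j1.
      by apply: val_inj => /=; rewrite run_merge x_j eqxx.
    by split => //; apply/eqP => j1_j; move: j1_succ; rewrite j1_j; lia.
  have -> : run delta x (merge_word n j) = x.
    by apply: val_inj => /=; rewrite run_merge (negPf ne_xj).
  by rewrite ne_xj.
by exists y => //; apply: val_inj => /=; rewrite run_merge (negPf ne_yj).
Qed.

Lemma val_run_Lb (q : 'I_n) k : val (run delta q (nseq k Lb)) = (q + k) %% n.
Proof. by rewrite val_run_Ln run_Lb. Qed.

Lemma Ln_reach_upper_closed m (S : {set 'I_n}) : m <= n.-1 ->
  (forall y : 'I_n, m <= y -> y \in S) -> exists w, run_set delta setT w = S.
Proof.
elim: m S => [|m IHm] S le_m upper_S.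
  by exists [::]; rewrite run_set_nil; apply/setP => y; rewrite inE upper_S.
have [lt_m lt_m1] : m < n /\ m.+1 < n by lia.
have upper_S' (y : 'I_n) : m <= y -> y \in Ordinal lt_m |: S.
  rewrite leq_eqVlt => /orP[/eqP m_y | lt_my]; last by rewrite setU1r ?upper_S.
  by rewrite (_ : y = Ordinal lt_m) ?setU11 //; apply: val_inj.
have [w reach_S'] := IHm _ (ltnW le_m) upper_S'.
case: (boolP (Ordinal lt_m \in S)) => [mS | mNS].
  by exists w; rewrite reach_S'; apply/setUidPr; rewrite sub1set.
exists (w ++ merge_word n m); rewrite run_set_cat reach_S'.
rewrite (@Ln_run_set_merge _ (Ordinal lt_m) (Ordinal lt_m1)) //; first exact: setU1K.
by rewrite setU1r ?upper_S.
Qed.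

Lemma Ln_reach (S : {set 'I_n}) : S != set0 -> exists w, run_set delta setT w = S.
Proof.
case/set0Pn => s sS.
have [w0 reach_S'] : exists w, run_set delta setT w = run_set delta S (nseq (n.-1 - s) Lb).
  apply: (Ln_reach_upper_closed (m := n.-1)) => // y le_y.
  apply/imsetP; exists s => //; apply: val_inj => /=.
  rewrite val_run_Lb modn_small; have := ltn_ord y; have := ltn_ord s; lia.
exists (w0 ++ nseq s.+1 Lb); rewrite run_set_cat reach_S' -run_set_cat -nseqD.
rewrite /run_set -[RHS]imset_id; apply: eq_imset => q; apply: val_inj => /=.
by rewrite val_run_Lb (_ : q + _ = q + n) ?modnDr ?modn_small //; have := ltn_ord s; lia.
Qed.

End LnSubsets.

Theorem proposition3 (n : nat) (hn : 3 <= n) :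
  state_complexity_is (Syn (@Ln_delta n)) (2 ^ n - n).
Proof.
have := Syn_state_complexity (@Ln_reach n hn) (@Ln_isolating n hn).
by rewrite card_ord.
Qed.
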